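(* Let $t,c,k\in\mathbb{N}$, let $G$ be a strongly $t$-boundaried graph, and let $H$ and $H'$ be $t$-boundaried graphs that are $c$-equivalent. Then $G\oplus H$ has a vertex cover of size at most $k$ if and only if $G\oplus H'$ has a vertex cover of size at most $k-c$.
   Context: Graphs are finite, simple, undirected. A graph $G$ is $t$-boundaried if $t$ of its non-isolated vertices $x_1,\dots,x_t$ (the boundary) are bijectively labeled with $1,\dots,t$; it is strongly $t$-boundaried if moreover $\{x_1,\dots,x_t\}$ is an independent set in $G$. For a strongly $t$-boundaried $G$ and a $t$-boundaried $H$, $G\oplus H$ (gluing) is obtained from the disjoint union of $G$ and $H$ by identifying the boundary vertices with the same label. A vertex set $S$ of $G\oplus H$ is compatible with $X\subseteq\{1,\dots,t\}$ in $G$ if for all $i$: $N_G(x_i)\subseteq S \iff i\in X$, where $N_G$ is the neighborhood in $G$. The profile $P^G_H:2^{\{1,\dots,t\}}\to\mathbb{N}\cup\{\infty\}$ assigns to $X$ the minimum of $|S\cap V(H)|$ over all vertex covers $S$ of $G\oplus H$ compatible with $X$ in $G$ ($\infty$ if none exists). Two $t$-boundaried graphs $H,H'$ are $c$-equivalent if $P^{G}_H(X)=P^{G}_{H'}(X)+c$ for every strongly $t$-boundaried graph $G$ and every $X\subseteq\{1,\dots,t\}$ (with $\infty+c=\infty$). *)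

From HB Require Import structures.
From mathcomp Require Import all_boot all_order all_algebra.
Set Implicit Arguments. Unset Strict Implicit. Unset Printing Implicit Defensive.

Record sgraph := SGraph {
  vert : finType;
  adj : rel vert;
  adj_sym : symmetric adj;
  adj_irr : irreflexive adj }.

(* A t-boundaried graph: t distinct non-isolated vertices labeled 1..t
   (here labels are 'I_t = {0,..,t-1}). *)
Record bgraph (t : nat) := BGraph {
  bg :> sgraph;
  bnd : 'I_t -> vert bg;
  bnd_inj : injective bnd;
  bnd_nonisol : forall i, exists v, adj (bnd i) v }.

Definition strongly t (G : bgraph t) : Prop :=
  forall i j : 'I_t, ~~ adj (bnd G i) (bnd G j).

Section Glue.
Variables (t : nat) (G H : bgraph t).

Definition glued : finType :=
  (vert G + {v : vert H | v \notin codom (bnd H)})%type.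

Definition glueG (x : vert G) : glued := inl x.

(* embedding of V(H) into V(G (+) H): boundary vertex x_i of H is identified
   with boundary vertex x_i of G *)
Definition glueH (v : vert H) : glued :=
  (if v \in codom (bnd H) as b return (v \in codom (bnd H)) = b -> glued
   then fun h => inl (bnd G (iinv (introT idP h)))
   else fun h => inr (exist _ v (negbT h))) (erefl _).

Definition glued_adj : rel glued := fun x y =>
  [exists a : vert G, exists b : vert G,
      [&& glueG a == x, glueG b == y & adj a b]]
  || [exists u : vert H, exists v : vert H,
      [&& glueH u == x, glueH v == y & adj u v]].

Definition compatible (X : {set 'I_t}) (S : {set glued}) : bool :=
  [forall i : 'I_t,
     [forall v : vert G, adj (bnd G i) v ==> (glueG v \in S)] == (i \in X)].

Definition cntH (S : {set glued}) : nat := #|[set v : vert H | glueH v \in S]|.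

End Glue.

Definition vertex_cover (T : finType) (e : rel T) (S : {set T}) : bool :=
  [forall x, forall y, e x y ==> (x \in S) || (y \in S)].

(* The profile P^G_H(X); None stands for infinity.  When the set of candidate
   covers is non-empty, the minimum is taken with #|V(H)| as (harmless) neutral
   element since cntH S <= #|V(H)|. *)
Definition profile t (G H : bgraph t) (X : {set 'I_t}) : option nat :=
  let A := [set S : {set glued G H} |
             vertex_cover (@glued_adj t G H) S && compatible X S] in
  if A == set0 then None
  else Some (\big[minn/#|vert H|]_(S in A) cntH S).

(* c-equivalence (infinity + c = infinity) *)
Definition c_equiv t (c : nat) (H H' : bgraph t) : Prop :=
  forall G : bgraph t, strongly G -> forall X : {set 'I_t},
    profile G H X = omap (fun p => p + c) (profile G H' X).

From mathcomp Require Import all_boot all_order all_algebra.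
Set Implicit Arguments. Unset Strict Implicit. Unset Printing Implicit Defensive.
Import Order.TTheory Num.Theory.

(* A vertex cover S of G (+) H consists of its part on the interior of G
   (the vertices of G off the boundary) and its part on H.  Let X be the set
   of labels i with N_G(x_i) contained in S; S is compatible with X, so its
   part on H has at least P_H(X) vertices.  Keep the interior part of S and
   take everything else from a minimum cover S' of G (+) H' compatible with X.
   This is again a vertex cover: the boundary of G is independent, so the only
   edges needing care join some x_i to an interior vertex b of G with b not in
   S; then i is not in X, so by compatibility S' misses some G-neighbour of
   x_i and hence contains x_i.  The new cover is smaller by
   P_H(X) - P_H'(X) = c, and the converse is symmetric. *)

Arguments glueG {t G} H x.
Arguments glueH {t} G {H} v.
Arguments glued_adj {t G H} _ _.

Lemma vertex_coverP (T : finType) (e : rel T) (S : {set T}) :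
  reflect (forall x y, e x y -> (x \in S) || (y \in S)) (vertex_cover e S).
Proof.
apply: (iffP forallP) => [coverS x y | coverS x].
  exact: implyP (forallP (coverS x) y).
by apply/forallP => y; apply/implyP/coverS.
Qed.

Lemma bigmin_nat_le_cond (I : finType) (P : pred I) (F : I -> nat) m j :
  P j -> \big[minn/m]_(i | P i) F i <= F j.
Proof. by move=> Pj; have := bigmin_le_cond m F Pj; rewrite minEnat leEnat. Qed.

Lemma bigmin_nat_attained (I : finType) (P : pred I) (F : I -> nat) m j :
  P j -> (forall i, F i <= m) ->
  exists2 i, P i & \big[minn/m]_(i | P i) F i = F i.
Proof.
move=> Pj Fm; rewrite -minEnat; exists [arg min_(i < j | P i) F i]%O.
  by case: arg_minP.
by apply: bigmin_eq_arg => // i _; rewrite leEnat.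
Qed.

Section GluedGraph.
Variables (t : nat) (G H : bgraph t).

(* [glueH] is a dependent match on [erefl b] with [b := _ \in codom (bnd H)];
   generalizing every occurrence of [b] but the left-hand side of that
   equation lets us case on it. *)
Lemma glueH_bnd i : glueH G (bnd H i) = glueG H (bnd G i).
Proof.
rewrite /glueH; move: (erefl (bnd H i \in codom (bnd H))) (codom_f (bnd H) i).
case: {2 3 4}(bnd H i \in codom (bnd H)) => // h _.
by rewrite /glueG (bnd_inj (f_iinv _)).
Qed.

Lemma glueH_val_inr (w : {v : vert H | v \notin codom (bnd H)}) :
  glueH G (val w) = inr w.
Proof.
rewrite /glueH; move: (erefl (val w \in codom (bnd H))) (valP w).
case: {2 3 4}(val w \in codom (bnd H)) => // h _.
by congr inr; apply: val_inj.
Qed.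

Variant glueH_spec (v : vert H) : glued G H -> Prop :=
  | GlueHBnd i of v = bnd H i : glueH_spec v (glueG H (bnd G i))
  | GlueHInner w of v = val w : glueH_spec v (inr w).

Lemma glueHP v : glueH_spec v (glueH G v).
Proof.
have [/codomP [i ->] | hv] := boolP (v \in codom (bnd H)).
  by rewrite glueH_bnd; constructor.
by have /= -> := glueH_val_inr (exist _ v hv); constructor.
Qed.

Lemma glueG_inj : injective (@glueG t G H).
Proof. by move=> a b []. Qed.

Lemma glueH_inj : injective (@glueH t G H).
Proof.
move=> u v; case: (glueHP u) => [i -> | w ->];
  case: (glueHP v) => [j -> | w' ->] //.
  by move/glueG_inj/bnd_inj ->.
by move=> [->].
Qed.

Lemma codom_glueH (x : glued G H) :
  (x \in codom (glueH G)) = if x is inl a then a \in codom (bnd G) else true.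
Proof.
apply/codomP/idP => [[v ->] | ].
  by case: (glueHP v) => [i _ | w _] //; exact: codom_f.
case: x => [a /codomP [i ->] | w _]; first by exists (bnd H i); rewrite glueH_bnd.
by exists (val w); rewrite glueH_val_inr.
Qed.

Lemma glued_adjG (a b : vert G) : adj a b -> glued_adj (glueG H a) (glueG H b).
Proof.
by move=> ab; apply/orP; left; apply/existsP; exists a; apply/existsP; exists b;
  rewrite !eqxx.
Qed.

Lemma glued_adjH (u v : vert H) : adj u v -> glued_adj (glueH G u) (glueH G v).
Proof.
by move=> uv; apply/orP; right; apply/existsP; exists u; apply/existsP; exists v;
  rewrite !eqxx.
Qed.

Definition inner (S : {set glued G H}) : {set vert G} :=
  [set a | (a \notin codom (bnd G)) && (glueG H a \in S)].

Lemma cntH_codom (S : {set glued G H}) :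
  cntH S = #|S :&: [set x in codom (glueH G)]|.
Proof.
rewrite /cntH -[[set v | _]]/[set v in [preim glueH G of S]] cardsE.
rewrite card_preim; last exact: glueH_inj.
by apply: eq_card => x; rewrite !inE andbC.
Qed.

Lemma card_glued (S : {set glued G H}) : #|S| = #|inner S| + cntH S.
Proof.
rewrite -(cardsID [set x in codom (glueH G)] S) cntH_codom addnC; congr (_ + _).
rewrite -(card_imset _ glueG_inj).
apply: eq_card => -[a | w]; rewrite !inE codom_glueH.
  by rewrite -[inl a]/(glueG H a) mem_imset ?inE 1?andbC //; exact: glueG_inj.
by apply/esym/imsetP => -[].
Qed.

Definition covered_labels (S : {set glued G H}) : {set 'I_t} :=
  [set i | [forall v, adj (bnd G i) v ==> (glueG H v \in S)]].

Lemma compatible_covered_labels (S : {set glued G H}) :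
  compatible (covered_labels S) S.
Proof. by apply/forallP => i; rewrite inE. Qed.

Lemma profile_le_cntH X (S : {set glued G H}) :
  vertex_cover glued_adj S -> compatible X S ->
  exists2 p, profile G H X = Some p & p <= cntH S.
Proof.
move=> coverS compS; rewrite /profile; set A := [set _ | _].
have SA : S \in A by rewrite inE coverS compS.
case: eqP => [A0 | _]; first by rewrite A0 inE in SA.
by eexists; [reflexivity | apply: bigmin_nat_le_cond].
Qed.

Lemma profile_attained X p :
  profile G H X = Some p ->
  exists S : {set glued G H},
    [/\ vertex_cover glued_adj S, compatible X S & cntH S = p].
Proof.
rewrite /profile; set A := [set _ | _].
case: eqP => // /eqP /set0Pn [S0 S0A] [<-].
have [S + ->] := @bigmin_nat_attained _ (fun S => S \in A) (@cntH t G H) _ _ S0A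
  (fun S => max_card _).
by rewrite inE => /andP [coverS compS]; exists S.
Qed.

End GluedGraph.

Section Splice.
Variables (t : nat) (G H1 H2 : bgraph t).
Hypothesis strongG : strongly G.

Definition splice (S : {set glued G H1}) (S' : {set glued G H2}) :
    {set glued G H2} :=
  [set x | if x is inl a then
             if a \in codom (bnd G) then x \in S' else glueG H1 a \in S
           else x \in S'].

Lemma inner_splice S S' : inner (splice S S') = inner S.
Proof. by apply/setP => a; rewrite !inE /=; case: (a \in codom (bnd G)). Qed.

Lemma splice_glueH S S' u : (glueH G u \in splice S S') = (glueH G u \in S').
Proof. by case: (glueHP G u) => [i _ | w _]; rewrite inE /= ?codom_f. Qed.

Lemma cntH_splice S S' : cntH (splice S S') = cntH S'.
Proof. by apply: eq_card => v; rewrite [LHS]inE [RHS]inE splice_glueH. Qed.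

Lemma card_splice S S' : #|splice S S'| = #|inner S| + cntH S'.
Proof. by rewrite card_glued inner_splice cntH_splice. Qed.

Lemma splice_cover_bnd S S' i b :
  vertex_cover glued_adj S' -> compatible (covered_labels S) S' ->
  adj (bnd G i) b -> (glueG H2 (bnd G i) \in S') || (glueG H1 b \in S).
Proof.
move=> coverS' compS' ib; case Sb: (_ \in S); first by rewrite orbT.
have /negbTE iNX : i \notin covered_labels S.
  by rewrite inE; apply/forallP => /(_ b); rewrite ib Sb.
move/forallP/(_ i)/eqP: compS'; rewrite iNX => /negbT/forallPn [w].
rewrite negb_imply => /andP [iw S'Nw].
move/vertex_coverP/(_ _ _ (glued_adjG H2 iw)): coverS'.
by rewrite (negbTE S'Nw) orbF.
Qed.

Lemma splice_cover S S' :
  vertex_cover glued_adj S -> vertex_cover glued_adj S' ->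
  compatible (covered_labels S) S' -> vertex_cover glued_adj (splice S S').
Proof.
move=> /vertex_coverP coverS coverS' compS'; apply/vertex_coverP => x y /orP [].
  move=> /existsP [a /existsP [b /and3P [/eqP <- /eqP <-]]]; rewrite !inE /=.
  case: (boolP (a \in codom (bnd G))) => [/codomP [i ->] | /negbTE aNB];
  case: (boolP (b \in codom (bnd G))) => [/codomP [j ->] | /negbTE bNB] ab;
    rewrite ?codom_f ?aNB ?bNB.
  - by move: ab; rewrite (negbTE (strongG i j)).
  - exact: splice_cover_bnd.
  - by rewrite orbC; apply: splice_cover_bnd; rewrite // adj_sym.
  - exact/coverS/glued_adjG.
move=> /existsP [u /existsP [v /and3P [/eqP <- /eqP <- uv]]].
by rewrite !splice_glueH; move/vertex_coverP: coverS'; apply; apply: glued_adjH.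
Qed.

Lemma exchange_cover (S : {set glued G H1}) p q :
  vertex_cover glued_adj S ->
  profile G H1 (covered_labels S) = Some p ->
  profile G H2 (covered_labels S) = Some q ->
  exists S' : {set glued G H2},
    vertex_cover glued_adj S' /\ #|S'| + p <= #|S| + q.
Proof.
move=> coverS profH1 profH2.
have [p'] := profile_le_cntH coverS (compatible_covered_labels S).
rewrite profH1 => -[<-] pS.
have [S' [coverS' compS' <-]] := profile_attained profH2.
exists (splice S S'); split; first exact: splice_cover.
by rewrite card_splice (card_glued S) addnAC leq_add2r leq_add2l.
Qed.

End Splice.

Theorem lemma3 (t c k : nat) (G H H' : bgraph t) :
  strongly G -> c_equiv c H H' ->
  ((exists S : {set glued G H},
       vertex_cover (@glued_adj t G H) S /\ #|S| <= k)
   <->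
   (exists S : {set glued G H'},
       vertex_cover (@glued_adj t G H') S /\
       (Posz #|S| <= Posz k - Posz c)%R)).
Proof.
move=> strongG equivHH'; split=> -[S [coverS sizeS]].
- have [p profH _] := profile_le_cntH coverS (compatible_covered_labels S).
  move: (equivHH' G strongG (covered_labels S)); rewrite profH.
  case profH': profile => [q|] //= [pE].
  have [S' [coverS' sizeS']] := exchange_cover strongG coverS profH profH'.
  exists S'; split=> //; rewrite lerBrDr -PoszD lez_nat.
  by apply: leq_trans sizeS; rewrite -(leq_add2r q) addnAC -addnA -pE.
- move: sizeS; rewrite lerBrDr -PoszD lez_nat => sizeS.
  have [q profH' _] := profile_le_cntH coverS (compatible_covered_labels S).
  move: (equivHH' G strongG (covered_labels S)); rewrite profH' /= => profH.
  have [S' [coverS' sizeS']] := exchange_cover strongG coverS profH' profH.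
  exists S'; split=> //.
  by apply: leq_trans sizeS; rewrite -(leq_add2r q) -addnA [c + q]addnC.
Qed.
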